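(* Let $\Sigma\in\mathcal{G}_n$ and $Q\in\mathcal{Q}(\Sigma)$ with level $\ell$, and let $p$ be a prime divisor of $\ell$. Then there exists an integral vector $z\not\equiv 0\pmod p$ such that $W(\Sigma)^{\rm T}z\equiv 0\pmod p$.
   Context: An oriented graph on vertices $v_1,\dots,v_n$ is a simple graph with each edge directed; its skew-adjacency matrix $S(\Sigma)=(s_{ij})$ has $s_{ij}=1$ if $(v_i,v_j)$ is an arc, $-1$ if $(v_j,v_i)$ is an arc, $0$ otherwise. Two oriented graphs are generalized cospectral if their skew-adjacency matrices $S$ have the same spectrum and the matrices $J-I-S$ have the same spectrum. With $e$ the all-one vector, $W(\Sigma)=[e,Se,\dots,S^{n-1}e]$, $S=S(\Sigma)$. $\mathcal{G}_n$ is the set of $n$-vertex oriented graphs with $2^{-\lfloor n/2\rfloor}\det W(\Sigma)$ an odd square-free integer. A rational orthogonal matrix $Q$ is regular if $Qe=e$; its level is the least positive integer $k$ with $kQ$ integral. $\mathcal{Q}(\Sigma)$ is the set of regular rational orthogonal $Q$ with $Q^{\rm T}S(\Sigma)Q=S(\Delta)$ for some oriented graph $\Delta$ generalized cospectral with $\Sigma$. *)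

From HB Require Import structures.
From mathcomp Require Import all_boot all_order all_algebra.
Set Implicit Arguments. Unset Strict Implicit. Unset Printing Implicit Defensive.
Import Order.TTheory GRing.Theory Num.Theory.
Local Open Scope ring_scope.

Definition oriented_graph (n : nat) (a : rel 'I_n) : Prop :=
  (forall i, ~~ a i i) /\ (forall i j, ~~ (a i j && a j i)).

Definition skewadj (n : nat) (a : rel 'I_n) : 'M[int]_n :=
  \matrix_(i, j) ((a i j)%:Z - (a j i)%:Z).

Definition onev (n : nat) : 'cV[int]_n := const_mx 1.
Definition Jmx (n : nat) : 'M[int]_n := const_mx 1.

(* same spectrum = same characteristic polynomial (eigenvalues with multiplicity) *)
Definition gen_cospectral (n : nat) (a b : rel 'I_n) : Prop :=
  char_poly (skewadj a) = char_poly (skewadj b) /\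
  char_poly (Jmx n - 1%:M - skewadj a) = char_poly (Jmx n - 1%:M - skewadj b).

Definition mxpow (n : nat) (A : 'M[int]_n) (k : nat) : 'M[int]_n :=
  iter k (mulmx A) 1%:M.

Definition walkmx (n : nat) (a : rel 'I_n) : 'M[int]_n :=
  \matrix_(i, j) ((mxpow (skewadj a) j *m onev n) i 0).

Definition squarefree_int (m : int) : Prop :=
  forall k : nat, (1 < k)%N -> ~~ (k ^ 2 %| `|m|)%N.

Definition in_Gn (n : nat) (a : rel 'I_n) : Prop :=
  oriented_graph a /\
  exists m : int, \det (walkmx a) = (2 ^ (n./2))%:Z * m /\
                  ~~ (2 %| m)%Z /\ squarefree_int m.

Definition int_mx (m n : nat) (A : 'M[rat]_(m, n)) : Prop :=
  forall i j, A i j \is a Num.int.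

Definition regular_rat_orth (n : nat) (Q : 'M[rat]_n) : Prop :=
  Q^T *m Q = 1%:M /\ Q *m const_mx 1 = (const_mx 1 : 'cV[rat]_n).

Definition is_level (n : nat) (Q : 'M[rat]_n) (l : nat) : Prop :=
  (0 < l)%N /\ int_mx (l%:R *: Q) /\
  forall k : nat, (0 < k)%N -> (k < l)%N -> ~ int_mx (k%:R *: Q).

Definition in_QSigma (n : nat) (a : rel 'I_n) (Q : 'M[rat]_n) : Prop :=
  regular_rat_orth Q /\
  exists b : rel 'I_n, oriented_graph b /\ gen_cospectral a b /\
    Q^T *m map_mx intr (skewadj a) *m Q = map_mx intr (skewadj b).

From HB Require Import structures.
From mathcomp Require Import all_boot all_order all_algebra.
Import Order.TTheory GRing.Theory Num.Theory.
Local Open Scope ring_scope.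

(* Orthogonality turns Q^T S(Sigma) Q = S(Delta) into
   Q^T S(Sigma) = S(Delta) Q^T, and Q^T e = e, so Q^T W(Sigma) = W(Delta).
   Hence the integral matrix lQ satisfies W(Sigma)^T (lQ) = l W(Delta)^T,
   which vanishes mod p, while by minimality of the level some entry of lQ
   is not divisible by p: its column is z. *)

Definition walk_mx {R : pzRingType} {n : nat} (S : 'M[R]_n) : 'M[R]_n :=
  \matrix_(i, j) ((iter j (mulmx S) 1%:M *m (const_mx 1 : 'cV[R]_n)) i 0).

Lemma map_mxpow {n : nat} (A : 'M[int]_n) (k : nat) :
  map_mx (intr : int -> rat) (mxpow A k) = iter k (mulmx (map_mx intr A)) 1%:M.
Proof.
elim: k => [|k IHk] /=; first by rewrite map_mx1.
by rewrite map_mxM -IHk.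
Qed.

Lemma map_walkmx {n : nat} (a : rel 'I_n) :
  map_mx (intr : int -> rat) (walkmx a) = walk_mx (map_mx intr (skewadj a)).
Proof.
apply/matrixP => i j; rewrite !mxE -map_mxpow rmorph_sum.
by apply: eq_bigr => k _; rewrite !mxE rmorphM.
Qed.

Lemma mulmx_iter_intertwine {R : pzRingType} {n : nat} {A B C : 'M[R]_n}
    (k : nat) :
  A *m B = C *m A -> A *m iter k (mulmx B) 1%:M = iter k (mulmx C) 1%:M *m A.
Proof.
move=> AB; elim: k => [|k IHk] /=; first by rewrite mulmx1 mul1mx.
by rewrite mulmxA AB -mulmxA IHk mulmxA.
Qed.

Lemma col_walk_mx {R : pzRingType} {n : nat} (S : 'M[R]_n) (j : 'I_n) :
  col j (walk_mx S) = iter j (mulmx S) 1%:M *m const_mx 1.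
Proof. by apply/matrixP => i k; rewrite !mxE ord1. Qed.

Lemma walk_mx_intertwine {R : pzRingType} {n : nat} (A S S' : 'M[R]_n) :
  A *m S = S' *m A -> A *m const_mx 1 = const_mx 1 :> 'cV_n ->
  A *m walk_mx S = walk_mx S'.
Proof.
move=> AS Ae; apply/matrixP => i j.
have colj : col j (A *m walk_mx S) = col j (walk_mx S').
  rewrite colE -mulmxA -colE !col_walk_mx mulmxA (mulmx_iter_intertwine j AS).
  by rewrite -mulmxA Ae.
by move/matrixP: colj => /(_ i 0); rewrite !mxE.
Qed.

Lemma regular_orth_trmx_walk_mx {F : fieldType} {n : nat} (Q S S' : 'M[F]_n) :
  Q^T *m Q = 1%:M -> Q *m const_mx 1 = const_mx 1 :> 'cV_n ->
  Q^T *m S *m Q = S' ->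
  Q^T *m walk_mx S = walk_mx S'.
Proof.
move=> QtQ Qe QSQ; have QQt : Q *m Q^T = 1%:M by apply: mulmx1C.
apply: walk_mx_intertwine.
  by rewrite -QSQ -!mulmxA QQt mulmx1.
by rewrite -{1}Qe mulmxA QtQ mul1mx.
Qed.

Lemma int_mx_intr {m n : nat} {A : 'M[rat]_(m, n)} :
  int_mx A -> exists Z : 'M[int]_(m, n), map_mx intr Z = A.
Proof.
move=> Aint; exists (\matrix_(i, j) Num.floor (A i j)).
by apply/matrixP => i j; rewrite !mxE floorK.
Qed.

(* If every entry of lQ were divisible by p, then (l/p) Q would be integral. *)
Lemma level_entry_not_dvd {n : nat} {Q : 'M[rat]_n} {l p : nat}
    {Z : 'M[int]_n} :
  is_level Q l -> (1 < p)%N -> (p %| l)%N -> map_mx intr Z = l%:R *: Q ->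
  exists i j, ~~ (p%:Z %| Z i j)%Z.
Proof.
move=> [l_gt0 [_ l_min]] p_gt1 /dvdnP [k def_l] ZE.
case: (boolP [exists i, exists j, ~~ (p%:Z %| Z i j)%Z]).
  by case/existsP => i /existsP [j Zij]; exists i, j.
move/existsPn => p_dvd_Z; exfalso.
have k_gt0 : (0 < k)%N by move: l_gt0; rewrite def_l muln_gt0 => /andP [].
apply: (l_min k k_gt0); first by rewrite def_l ltn_Pmulr.
move=> i j; have /existsPn /(_ j) /negPn /dvdzP [m Zij] := p_dvd_Z i.
apply/intrP; exists m.
have pn0 : (p%:R : rat) != 0 by rewrite pnatr_eq0 -lt0n ltnW.
apply: (mulIf pn0); move/matrixP: ZE => /(_ i j).
by rewrite !mxE Zij def_l intrM natrM mulrAC => ->.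
Qed.

Lemma map_mx_intr_inj {R : numDomainType} {m n : nat} :
  injective (map_mx (intr : int -> R) : 'M_(m, n) -> 'M_(m, n)).
Proof.
move=> A B /matrixP AB; apply/matrixP => i j.
by apply: (@intr_inj R); have := AB i j; rewrite !mxE.
Qed.

Lemma trmx_mul_integral_multiple {m n : nat} {A B : 'M[int]_(n, m)}
    {Q : 'M[rat]_n} {l : nat} {Z : 'M[int]_n} :
  Q^T *m map_mx intr A = map_mx intr B ->
  map_mx intr Z = l%:R *: Q -> A^T *m Z = l%:Z *: B^T.
Proof.
move=> QB ZE; apply: (@map_mx_intr_inj rat).
by rewrite map_mxM ZE map_mxZ -!map_trmx -QB trmx_mul trmxK scalemxAr.
Qed.

Theorem lemma3p2 (n : nat) (a : rel 'I_n) (Q : 'M[rat]_n) (l p : nat) :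
  in_Gn a -> in_QSigma a Q -> is_level Q l -> prime p -> (p %| l)%N ->
  exists z : 'cV[int]_n,
    (exists i, ~~ (p%:Z %| z i ord0)%Z) /\
    (forall j, (p%:Z %| ((walkmx a)^T *m z) j ord0)%Z).
Proof.
move=> _ [[QtQ Qe] [b [_ [_ QSQ]]]] levelQ p_prime p_dvd_l.
have QW : Q^T *m map_mx intr (walkmx a) = map_mx intr (walkmx b).
  by rewrite !map_walkmx; exact: regular_orth_trmx_walk_mx.
have [_ [lQint _]] := levelQ.
have [Z ZE] := int_mx_intr lQint.
have WZ := trmx_mul_integral_multiple QW ZE.
have [i [j Zij]] := level_entry_not_dvd levelQ (prime_gt1 p_prime) p_dvd_l ZE.
exists (col j Z); split; first by exists i; rewrite mxE.
move=> k; rewrite colE mulmxA -colE mxE WZ mxE.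
by apply: dvdz_mulr; rewrite dvdzE.
Qed.
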